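(* Let $p$ be a propositional variable. In each of the modal fragments $\mathrm{ML}_{\{\oplus_3,\Diamond\}}[\{p\}]$, $\mathrm{ML}_{\{\oplus_3,\Box\}}[\{p\}]$, $\mathrm{ML}_{\{\mathsf{oxor},\Diamond\}}[\{p\}]$, $\mathrm{ML}_{\{\mathsf{oxor},\Box\}}[\{p\}]$, $\mathrm{ML}_{\{\mathsf{aimp},\Diamond\}}[\{p\}]$ and $\mathrm{ML}_{\{\mathsf{aimp},\Box\}}[\{p\}]$, the atomic formula $p$ is not uniquely characterized with respect to that fragment by any finite set of labeled examples; in particular none of these fragments admits finite characterizations.
   Context: $\oplus_3(x,y,z)=x\oplus y\oplus z$, $\mathsf{oxor}(x,y,z)=x\lor(y\oplus z)$, $\mathsf{aimp}(x,y,z)=x\land(y\to z)$. For a Boolean function $g$ and $\heartsuit\in\{\Diamond,\Box\}$, $\mathrm{ML}_{\{g,\heartsuit\}}[\{p\}]$ is the set of modal formulas generated by $\phi::=p\mid g(\phi_1,\phi_2,\phi_3)\mid\heartsuit\phi$, with $g$ interpreted pointwise and the usual Kripke semantics. Formulas are equivalent if they are $\mathbf{K}$-equivalent (true at the same worlds of all Kripke models). A labeled example is $(M,w,\mathrm{lab})$ with $M$ a finite Kripke model, $w$ a world, $\mathrm{lab}\in\{0,1\}$; $\phi$ fits it if ($M,w\models\phi$ iff $\mathrm{lab}=1$). A set $E$ of labeled examples uniquely characterizes $\phi$ with respect to a fragment $L$ if $\phi$ fits all of $E$ and every formula of $L$ fitting all of $E$ is equivalent to $\phi$. A fragment admits finite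 characterizations if every formula in it is uniquely characterized with respect to it by a finite set of labeled examples. *)

From Stdlib Require List.
From mathcomp Require Import all_boot.
Set Implicit Arguments. Unset Strict Implicit. Unset Printing Implicit Defensive.

Definition xor3 (x y z : bool) : bool := x (+) y (+) z.
Definition oxor (x y z : bool) : bool := x || (y (+) z).
Definition aimp (x y z : bool) : bool := x && (y ==> z).

Inductive modality := Dia | Box.

Inductive form : Type :=
| PVar : form
| GApp : form -> form -> form -> form
| Mod : form -> form.

Fixpoint sat (g : bool -> bool -> bool -> bool) (h : modality)
  (W : Type) (R : W -> W -> Prop) (V : W -> Prop) (phi : form) (w : W) : Prop :=
  match phi with
  | PVar => V w
  | GApp a b c => exists b1 b2 b3 : bool,
      (b1 = true <-> sat g h R V a w) /\ (b2 = true <-> sat g h R V b w) /\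
      (b3 = true <-> sat g h R V c w) /\ g b1 b2 b3 = true
  | Mod a => match h with
             | Dia => exists v, R w v /\ sat g h R V a v
             | Box => forall v, R w v -> sat g h R V a v
             end
  end.

Definition equiv g h (phi psi : form) : Prop :=
  forall (W : Type) (R : W -> W -> Prop) (V : W -> Prop) (w : W),
    sat g h R V phi w <-> sat g h R V psi w.

Record example : Type := Example {
  ex_W : finType;
  ex_R : rel ex_W;
  ex_V : pred ex_W;
  ex_w : ex_W;
  ex_lab : bool }.

Definition fits g h (phi : form) (e : example) : Prop :=
  sat g h (fun x y : ex_W e => ex_R x y) (fun x : ex_W e => ex_V x) phi (ex_w e)
  <-> ex_lab e = true.

Definition uniquely_characterizes g h (E : seq example) (phi : form) : Prop :=
  (forall e, List.In e E -> fits g h phi e) /\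
  (forall psi, (forall e, List.In e E -> fits g h psi e) -> equiv g h phi psi).

Definition admits_finite_characterizations g h : Prop :=
  forall phi : form, exists E : seq example, uniquely_characterizes g h E phi.

(** For a fixed finite set of examples, every sequence of truth sets of
    [M^k p] (with [M] the modality) is eventually periodic, so there are
    [0 < a] and [0 < L] such that [M^a p] and [M^(a+L) p] agree on all examples.
    Each of the three functions satisfies [g b c c = b], hence
    [g(p, M^a p, M^(a+L) p)] fits every example exactly as [p] does.  It is
    not equivalent to [p], however: on the successor chain of [nat], worlds
    [0], [a] and [a + L] are distinct and can be labelled independently, and
    [g] is not the first projection. *)
From mathcomp Require Import all_boot.
Set Implicit Arguments. Unset Strict Implicit. Unset Printing Implicit Defensive.

Section Semantics.
Variables (g : bool -> bool -> bool -> bool) (h : modality).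

Lemma sat_GApp (W : Type) (R : W -> W -> Prop) (V : W -> Prop) x y z w b1 b2 b3 :
  reflect (sat g h R V x w) b1 -> reflect (sat g h R V y w) b2 ->
  reflect (sat g h R V z w) b3 ->
  sat g h R V (GApp x y z) w <-> g b1 b2 b3.
Proof.
move=> Px Py Pz /=; split=> [[c1 [c2 [c3 [Ex [Ey [Ez]]]]]] | g_b].
  by rewrite -(sameP (equivP idP Ex) Px) -(sameP (equivP idP Ey) Py)
             -(sameP (equivP idP Ez) Pz).
by exists b1, b2, b3; do ![split; first exact: iff_sym (rwP _)].
Qed.

Definition mod_set (W : finType) (R : rel W) (S : {set W}) : {set W} :=
  match h with
  | Dia => [set w | [exists v, R w v && (v \in S)]]
  | Box => [set w | [forall v, R w v ==> (v \in S)]]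
  end.

Lemma sat_iter_Mod_fin (W : finType) (R : rel W) (V : pred W) k w :
  reflect (sat g h (fun x y => R x y) (fun x => V x) (iter k Mod PVar) w)
          (w \in iter k (mod_set R) [set x | V x]).
Proof.
elim: k w => [|k IHk] w /=; first by rewrite inE; apply: idP.
set S := iter k (mod_set R) _ in IHk *.
rewrite /mod_set; case: h IHk => IHk /=; rewrite inE.
- apply: (iffP existsP) => [[v /andP[Rwv /IHk]] | [v [Rwv /IHk]]] Sv.
    by exists v.
  by exists v; rewrite Rwv.
- apply: (iffP forallP) => Sv v; first by move/(implyP (Sv v))/IHk.
  by apply/implyP=> Rwv; apply/IHk/Sv.
Qed.

Lemma sat_iter_Mod_succ (V : pred nat) k i :
  reflect (sat g h (fun x y : nat => y = x.+1) (fun x => V x) (iter k Mod PVar) i)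
          (V (i + k)).
Proof.
elim: k i => [|k IHk] i /=; first by rewrite addn0; apply: idP.
rewrite addnS -addSn; case: h IHk => IHk /=.
- by apply: (iffP (IHk i.+1)) => [Sv | [_ [-> Sv]]] //; exists i.+1.
- by apply: (iffP (IHk i.+1)) => [Sv _ -> | Sv] //; apply: Sv.
Qed.

Lemma sat_GApp_iter_Mod_fin (W : finType) (R : rel W) (V : pred W) m n w :
  sat g h (fun x y => R x y) (fun x => V x)
      (GApp PVar (iter m Mod PVar) (iter n Mod PVar)) w <->
  g (V w) (w \in iter m (mod_set R) [set x | V x])
          (w \in iter n (mod_set R) [set x | V x]).
Proof. by apply: sat_GApp; [apply: idP | apply: sat_iter_Mod_fin ..]. Qed.

Lemma sat_GApp_iter_Mod_succ (V : pred nat) m n i :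
  sat g h (fun x y : nat => y = x.+1) (fun x => V x)
      (GApp PVar (iter m Mod PVar) (iter n Mod PVar)) i <->
  g (V i) (V (i + m)) (V (i + n)).
Proof. by apply: sat_GApp; [apply: idP | apply: sat_iter_Mod_succ ..]. Qed.

End Semantics.

Definition periodic_from (T : Type) (u : nat -> T) (a L : nat) : Prop :=
  forall k, a <= k -> u (k + L) = u k.

Lemma iter_periodic_from (T : finType) (f : T -> T) x :
  exists a L, 0 < L /\ periodic_from (fun k => iter k f x) a L.
Proof.
have /trajectP[a lt_a_ord loop_a] := looping_order f x.
exists a, (order f x - a); split=> [|k le_ak]; first by rewrite subn_gt0.
by rewrite -(subnK le_ak) -addnA subnKC ?(ltnW lt_a_ord) // !iterD loop_a.
Qed.

Lemma periodic_from_mul (T : Type) (u : nat -> T) a L j :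
  periodic_from u a L -> periodic_from u a (j * L).
Proof.
move=> perL; elim: j => [|j IHj] k le_ak; first by rewrite mul0n addn0.
by rewrite mulSn addnA addnAC perL ?IHj // (leq_trans le_ak) ?leq_addr.
Qed.

Lemma periodic_from_le (T : Type) (u : nat -> T) a b L :
  a <= b -> periodic_from u a L -> periodic_from u b L.
Proof. by move=> le_ab perL k le_bk; apply/perL/(leq_trans le_ab). Qed.

Lemma common_periodic_from (I : Type) (T : I -> Type) (u : forall i, nat -> T i)
    (s : seq I) :
  (forall i, exists a L, 0 < L /\ periodic_from (u i) a L) ->
  exists a L, 0 < L /\ forall i, List.In i s -> periodic_from (u i) a L.
Proof.
move=> per_u; elim: s => [|i s [a [L [L_gt0 per_s]]]]; first by exists 0, 1.
have [b [M [M_gt0 per_i]]] := per_u i.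
exists (maxn a b), (L * M); split=> [|j [<- | s_j]]; first by rewrite muln_gt0 L_gt0.
- exact/(periodic_from_le (leq_maxr a b))/periodic_from_mul.
- by rewrite mulnC; exact/(periodic_from_le (leq_maxl a b))/periodic_from_mul/per_s.
Qed.

Section NoFiniteCharacterization.
Variables (g : bool -> bool -> bool -> bool) (h : modality).
Hypothesis g_diag : forall b c, g b c c = b.
Hypothesis g_not_proj : exists b c d, g b c d != b.

Definition truth_set (e : example) (k : nat) : {set ex_W e} :=
  iter k (mod_set h (@ex_R e)) [set x | ex_V x].

Lemma PVar_not_finitely_characterized (E : seq example) :
  ~ uniquely_characterizes g h E PVar.
Proof.
have [a [L [L_gt0 per]]] := common_periodic_from (u := truth_set) E
  (fun e => iter_periodic_from _ _).
pose psi := GApp PVar (iter a.+1 Mod PVar) (iter (a.+1 + L) Mod PVar).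
case=> fitsE /(_ psi) psi_equiv.
have psi_fits : forall e, List.In e E -> fits g h psi e.
  move=> e /[dup] /fitsE fits_p /per /(_ a.+1 (leqnSn a)) per_e.
  apply: iff_trans fits_p.
  apply: iff_trans (sat_GApp_iter_Mod_fin _ _ _ _ _ _ _) _.
  by move: per_e; rewrite /truth_set => ->; rewrite g_diag.
have [b [c [d gbcd]]] := g_not_proj.
pose V (i : nat) := [|| (i == 0) && b, (i == a.+1) && c | (i == a.+1 + L) && d].
have := iff_trans (psi_equiv psi_fits nat (fun x y => y = x.+1) (fun x => V x) 0)
                  (sat_GApp_iter_Mod_succ _ _ _ _ _ _).
have LaF : (a.+1 + L == a.+1) = false by rewrite -{2}[a.+1]addn0 eqn_add2l gtn_eqF.
rewrite {}/V /= !add0n !eqxx eq_sym LaF /= !orbF.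
by case: b (g b c d) gbcd => [] [] // _ [H1 H2]; [move: (H1 isT) | move: (H2 isT)].
Qed.

End NoFiniteCharacterization.

Theorem propositionB5 (g : bool -> bool -> bool -> bool) (h : modality) :
  (g = xor3 \/ g = oxor \/ g = aimp) ->
  (forall E : seq example, ~ uniquely_characterizes g h E PVar) /\
  ~ admits_finite_characterizations g h.
Proof.
move=> g_cases.
have g_diag : forall b c, g b c c = b by case: g_cases => [|[|]] -> [] [].
have g_not_proj : exists b c d, g b c d != b.
  by case: g_cases => [|[|]] ->; [exists false, true, false ..| exists true, true, false].
have no_char := PVar_not_finitely_characterized (h := h) g_diag g_not_proj.
by split=> // /(_ PVar) [E]; apply: no_char.
Qed.
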